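(* For every integer $n\ge1$ and every $\lambda<0$, $$G_{n,n+1}(\lambda):=\frac{\frac{d}{d\lambda}h^{(1)}_{n+1}(-i\lambda)}{h^{(1)}_{n+1}(-i\lambda)}-\frac{\frac{d}{d\lambda}h^{(1)}_{n}(-i\lambda)}{h^{(1)}_{n}(-i\lambda)}>0.$$
   Context: For $n\ge0$ let $R_n(w)=\sum_{m=0}^n\frac{(n+m)!}{m!\,(n-m)!}w^m$. The spherical Hankel function of the first kind satisfies, for real $\lambda<0$, $h^{(1)}_n(-i\lambda)=(-i)^n\frac{e^{\lambda}}{\lambda}R_n\!\left(-\frac{1}{2\lambda}\right)$ (up to an $n$-independent normalizing constant, which does not affect the logarithmic derivatives); $\frac{d}{d\lambda}h^{(1)}_n(-i\lambda)$ denotes the derivative of the function $\lambda\mapsto h^{(1)}_n(-i\lambda)$. *)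

From Stdlib Require Import Arith Reals Lra Lia.
Open Scope R_scope.

Definition Rpoly (n : nat) (w : R) : R :=
  sum_f_R0 (fun m => INR (fact (n + m)) / (INR (fact m) * INR (fact (n - m))) * w ^ m) n.

(* Real part of the representation h^{(1)}_n(-i lam) = (-i)^n * e^lam/lam * R_n(-1/(2 lam)):
   hreal n lam := e^lam/lam * R_n(-1/(2 lam)).  The factor (-i)^n (and any normalizing
   constant) is independent of lam, so h'/h = hreal'/hreal exactly. *)
Definition hreal (n : nat) (lam : R) : R :=
  exp lam / lam * Rpoly n (- / (2 * lam)).

(* The functions h_n := hreal n satisfy h_n' = h_(n+1) + (n/lam) h_n and the three-term
   recurrence h_(n+2) = h_n - ((2n+3)/lam) h_(n+1), inherited from
   R_(n+2) = R_n + 2(2n+3) w R_(n+1).  With w = -1/(2 lam) > 0, a = R_n(w), b = R_(n+1)(w),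
   these reduce G_(n,n+1) to (a^2 + 2(n+1)(2w) a b - b^2) / (a b).  The numerator D_n obeys
   D_(n+1) = (2n+3)(2w)^2 b^2 - D_n, so 0 < D_n <= (2n+1)(2w)^2 a^2 together with a <= b
   propagates by induction from D_0 = (2w)^2. *)
From Stdlib Require Import Reals Arith Lra Lia.
From Coquelicot Require Import Coquelicot.
Open Scope R_scope.

Definition bessel_coef (n m : nat) : R :=
  if le_dec m n then INR (fact (n + m)) / (INR (fact m) * INR (fact (n - m))) else 0.

Lemma bessel_coef_0 n : bessel_coef n 0 = 1.
Proof.
  unfold bessel_coef; destruct (le_dec 0 n) as [_|]; [|lia].
  rewrite Nat.add_0_r, Nat.sub_0_r; simpl; field; apply INR_fact_neq_0.
Qed.

Ltac fact_field :=
  rewrite ?fact_simpl; repeat rewrite ?mult_INR, ?plus_INR, ?S_INR; simpl INR;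
  field; repeat split; try apply INR_fact_neq_0; lra.

Lemma bessel_coef_rec n i :
  bessel_coef (S (S n)) (S i) = bessel_coef n (S i) + 2 * (2 * INR n + 3) * bessel_coef (S n) i.
Proof.
  unfold bessel_coef.
  destruct (le_dec i (S n)) as [Hi|Hi]; [|repeat (destruct le_dec; [lia|]); ring].
  destruct (le_dec (S i) (S (S n))) as [_|]; [|lia].
  destruct (le_dec (S i) n) as [Hin|Hni].
  - destruct (Nat.le_exists_sub (S i) n Hin) as [j [-> _]].
    replace (S (S (j + S i)) + S i)%nat with (S (S (S (S (i + i + j)))))%nat by lia.
    replace (j + S i + S i)%nat with (S (S (i + i + j)))%nat by lia.
    replace (S (j + S i) + i)%nat with (S (S (i + i + j)))%nat by lia.
    replace (S (S (j + S i)) - S i)%nat with (S (S j)) by lia.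
    replace (j + S i - S i)%nat with j by lia.
    replace (S (j + S i) - i)%nat with (S (S j)) by lia.
    pose proof (pos_INR i); pose proof (pos_INR j).
    fact_field.
  - pose proof (pos_INR n).
    assert (i = n \/ i = S n) as [-> | ->] by lia.
    + replace (S (S n) + S n)%nat with (S (S (S (n + n))))%nat by lia.
      replace (S n + n)%nat with (S (n + n))%nat by lia.
      replace (S (S n) - S n)%nat with 1%nat by lia.
      replace (S n - n)%nat with 1%nat by lia.
      fact_field.
    + replace (S (S n) + S (S n))%nat with (S (S (S (S (n + n)))))%nat by lia.
      replace (S n + S n)%nat with (S (S (n + n)))%nat by lia.
      rewrite !Nat.sub_diag.
      fact_field.
Qed.

Lemma Rpoly_bessel_coef n w : Rpoly n w = sum_f_R0 (fun m => bessel_coef n m * w ^ m) n.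
Proof.
  apply sum_eq; intros m Hm.
  unfold bessel_coef; destruct (le_dec m n); [reflexivity | lia].
Qed.

Lemma sum_bessel_coef_beyond n k w :
  sum_f_R0 (fun m => bessel_coef n m * w ^ m) (n + k) = Rpoly n w.
Proof.
  rewrite Rpoly_bessel_coef.
  induction k as [|k IH]; [now rewrite Nat.add_0_r|].
  rewrite Nat.add_succ_r; simpl sum_f_R0; rewrite IH.
  unfold bessel_coef at 2; destruct (le_dec (S (n + k)) n); [lia | ring].
Qed.

Lemma Rpoly_0 w : Rpoly 0 w = 1.
Proof. rewrite Rpoly_bessel_coef; simpl; rewrite bessel_coef_0; ring. Qed.

Lemma Rpoly_1 w : Rpoly 1 w = 1 + 2 * w.
Proof.
  rewrite Rpoly_bessel_coef; simpl; rewrite bessel_coef_0.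
  unfold bessel_coef; simpl; field.
Qed.

Lemma Rpoly_SS n w : Rpoly (S (S n)) w = Rpoly n w + 2 * (2 * INR n + 3) * w * Rpoly (S n) w.
Proof.
  rewrite <- (sum_bessel_coef_beyond n 2), !Rpoly_bessel_coef, scal_sum.
  rewrite (decomp_sum _ (S (S n))), (decomp_sum _ (n + 2)) by lia.
  replace (pred (n + 2)) with (S n) by lia; simpl pred.
  rewrite !bessel_coef_0.
  rewrite (sum_eq (fun i => bessel_coef (S (S n)) (S i) * w ^ S i)
             (fun i => bessel_coef n (S i) * w ^ S i
                       + bessel_coef (S n) i * w ^ i * (2 * (2 * INR n + 3) * w))).
  - rewrite plus_sum; ring.
  - intros i _; rewrite bessel_coef_rec; simpl pow; ring.
Qed.

Definition Rpoly_discr (n : nat) (w : R) : R :=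
  Rpoly n w ^ 2 + 2 * (INR n + 1) * (2 * w) * Rpoly n w * Rpoly (S n) w - Rpoly (S n) w ^ 2.

Lemma Rpoly_discr_S n w :
  Rpoly_discr (S n) w = (2 * INR n + 3) * (2 * w) ^ 2 * Rpoly (S n) w ^ 2 - Rpoly_discr n w.
Proof. unfold Rpoly_discr; rewrite Rpoly_SS, S_INR; ring. Qed.

Lemma lt_of_discr_pos a b k :
  0 < a <= b -> 0 < k -> 0 < a ^ 2 + k * a * b - b ^ 2 -> b < a + k * b.
Proof.
  intros [Ha Hab] Hk HD.
  (* (b - a) b <= b^2 - a^2 < k a b <= k b^2 *)
  assert (Hdiff : (b - a) * b < k * b * b) by nra.
  assert (b - a < k * b) by (apply (Rmult_lt_reg_r b); nra).
  lra.
Qed.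

Lemma Rpoly_discr_bounds w : 0 < w -> forall n,
  0 < Rpoly n w <= Rpoly (S n) w /\
  0 < Rpoly_discr n w <= (2 * INR n + 1) * (2 * w) ^ 2 * Rpoly n w ^ 2.
Proof.
  intros Hw n; induction n as [|n [[Ha Hab] [HD HDle]]].
  - unfold Rpoly_discr; rewrite Rpoly_0, Rpoly_1; simpl INR; nra.
  - rewrite Rpoly_discr_S, S_INR.
    pose proof (pos_INR n).
    assert (Hlt : Rpoly (S n) w < Rpoly n w + 2 * (INR n + 1) * (2 * w) * Rpoly (S n) w).
    { apply lt_of_discr_pos; [lra | nra | exact HD]. }
    assert (Hsq : Rpoly n w ^ 2 <= Rpoly (S n) w ^ 2) by nra.
    assert (Hwb : 0 < w * Rpoly (S n) w) by nra.
    assert (Hsq2 : (2 * w) ^ 2 * Rpoly n w ^ 2 <= (2 * w) ^ 2 * Rpoly (S n) w ^ 2)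
      by (apply Rmult_le_compat_l; nra).
    assert (Hb2 : 0 < (2 * w) ^ 2 * Rpoly (S n) w ^ 2) by (apply Rmult_lt_0_compat; nra).
    assert (Hgrow : (2 * INR n + 1) * (2 * w) ^ 2 * Rpoly n w ^ 2
                    < (2 * INR n + 3) * (2 * w) ^ 2 * Rpoly (S n) w ^ 2) by nra.
    rewrite Rpoly_SS; repeat split; nra.
Qed.

Lemma hreal_SS n lam : lam <> 0 ->
  hreal (S (S n)) lam = hreal n lam - (2 * INR n + 3) / lam * hreal (S n) lam.
Proof. intros Hlam; unfold hreal; rewrite Rpoly_SS; field; exact Hlam. Qed.

Definition hreal_deriv (n : nat) (lam : R) : R := hreal (S n) lam + INR n / lam * hreal n lam.

Lemma is_derive_hreal_0 lam : lam < 0 -> is_derive (hreal 0) lam (hreal_deriv 0 lam).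
Proof.
  intros Hlam.
  assert (E : forall t, exp t / t = hreal 0 t) by (intros t; unfold hreal; rewrite Rpoly_0; ring).
  apply (is_derive_ext _ _ _ _ E).
  auto_derive; [lra|].
  unfold hreal_deriv, hreal; rewrite Rpoly_0, Rpoly_1; simpl INR; field; lra.
Qed.

Lemma is_derive_hreal_1 lam : lam < 0 -> is_derive (hreal 1) lam (hreal_deriv 1 lam).
Proof.
  intros Hlam.
  assert (E : forall t, exp t / t * (1 + 2 * - / (2 * t)) = hreal 1 t)
    by (intros t; unfold hreal; rewrite Rpoly_1; ring).
  apply (is_derive_ext _ _ _ _ E).
  auto_derive; [lra|].
  unfold hreal_deriv; rewrite hreal_SS by lra.
  unfold hreal; rewrite Rpoly_0, Rpoly_1; simpl INR; field; lra.
Qed.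

Lemma is_derive_hreal_SS n lam : lam < 0 ->
  is_derive (hreal n) lam (hreal_deriv n lam) ->
  is_derive (hreal (S n)) lam (hreal_deriv (S n) lam) ->
  is_derive (hreal (S (S n))) lam (hreal_deriv (S (S n)) lam).
Proof.
  intros Hlam H0 H1.
  assert (Hinv : is_derive Rinv lam (- 1 / lam ^ 2))
    by (auto_derive; [lra | field; lra]).
  pose proof (is_derive_minus _ _ lam _ _ H0
                (is_derive_scal _ lam (2 * INR n + 3) _
                   (is_derive_mult Rinv (hreal (S n)) lam _ _ Hinv H1 Rmult_comm))) as Hd.
  match type of Hd with is_derive _ _ ?d => replace (hreal_deriv (S (S n)) lam) with d end.
  - refine (is_derive_ext_loc _ _ lam _ _ Hd).
    apply (filter_imp (fun t => t < 0)); [| exact (open_lt 0 lam Hlam)].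
    intros t Ht; rewrite hreal_SS by lra; unfold minus, plus, opp, mult; simpl; field; lra.
  - unfold hreal_deriv; rewrite (hreal_SS (S n)), (hreal_SS n) by lra; rewrite !S_INR.
    unfold minus, plus, opp, mult; simpl; field; lra.
Qed.

Lemma is_derive_hreal n lam : lam < 0 -> is_derive (hreal n) lam (hreal_deriv n lam).
Proof.
  intros Hlam.
  enough (H : is_derive (hreal n) lam (hreal_deriv n lam) /\
              is_derive (hreal (S n)) lam (hreal_deriv (S n) lam)) by apply H.
  induction n as [|n [H0 H1]].
  - split; [apply is_derive_hreal_0 | apply is_derive_hreal_1]; exact Hlam.
  - split; [exact H1 | apply is_derive_hreal_SS; assumption].
Qed.

Lemma hreal_log_deriv_gap n lam : lam < 0 ->
  let w := - / (2 * lam) in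
  Rpoly n w <> 0 -> Rpoly (S n) w <> 0 ->
  hreal_deriv (S n) lam / hreal (S n) lam - hreal_deriv n lam / hreal n lam
  = Rpoly_discr n w / (Rpoly n w * Rpoly (S n) w).
Proof.
  intros Hlam w Ha Hb.
  pose proof (exp_pos lam).
  unfold hreal_deriv; rewrite hreal_SS, S_INR by lra.
  unfold Rpoly_discr, hreal, w.
  field; repeat split; lra || assumption.
Qed.

Theorem proposition3p1 :
  forall (n : nat) (lam : R), (1 <= n)%nat -> lam < 0 ->
  exists d1 d0 : R,
    derivable_pt_lim (hreal (S n)) lam d1 /\
    derivable_pt_lim (hreal n) lam d0 /\
    d1 / hreal (S n) lam - d0 / hreal n lam > 0.
Proof.
  intros n lam _ Hlam.
  exists (hreal_deriv (S n) lam), (hreal_deriv n lam).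
  split; [|split]; try (apply is_derive_Reals, is_derive_hreal, Hlam).
  assert (Hw : 0 < - / (2 * lam)) by (apply Ropp_0_gt_lt_contravar, Rinv_lt_0_compat; lra).
  destruct (Rpoly_discr_bounds _ Hw n) as [[Ha Hab] [HD _]].
  rewrite hreal_log_deriv_gap by lra.
  apply Rdiv_lt_0_compat; [exact HD | apply Rmult_lt_0_compat; lra].
Qed.
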